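(* Let $\mathbf G=(G,\le,\cdot,/,0,1)$ be a left-residuated po-groupoid with commutative multiplication whose underlying poset is a lattice. Then: (i) if $\mathbf G$ satisfies the contraposition law $x/y=\neg y/\neg x$, it satisfies $\neg\neg x=x$; (ii) if $\mathbf G$ satisfies the skew divisibility law $(\neg y/\neg x)\cdot y=x\wedge y$, it satisfies $\neg\neg x=x$; (iii) $\mathbf G$ satisfies the skew divisibility law $(\neg y/\neg x)\cdot y=x\wedge y$ (for all $x,y$) if and only if it satisfies both the divisibility law $(x/y)\cdot y=x\wedge y$ and the contraposition law $x/y=\neg y/\neg x$ (for all $x,y$).
   Context: A (bounded integral) left-residuated po-groupoid is a structure $\mathbf G=(G,\le,\cdot,/,0,1)$ where $(G,\le,0,1)$ is a bounded poset with least element $0$ and greatest element $1$, $\cdot$ is a binary operation on $G$ with $1\cdot x=x\cdot 1=x$ for all $x$, and $/$ is a binary operation on $G$ satisfying the left residuation law: for all $x,y,z\in G$, $x\cdot y\le z\iff x\le z/y$. The negation is $\neg x:=0/x$; $\wedge$ denotes the lattice meet. *)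

Set Implicit Arguments.

Record LRPOG := {
  carrier :> Type;
  le : carrier -> carrier -> Prop;
  mul : carrier -> carrier -> carrier;
  rdiv : carrier -> carrier -> carrier;
  zero : carrier;
  one : carrier;
  le_refl : forall x, le x x;
  le_antisym : forall x y, le x y -> le y x -> x = y;
  le_trans : forall x y z, le x y -> le y z -> le x z;
  zero_least : forall x, le zero x;
  one_greatest : forall x, le x one;
  mul_1l : forall x, mul one x = x;
  mul_1r : forall x, mul x one = x;
  residuation : forall x y z, le (mul x y) z <-> le x (rdiv z y)
}.

Definition neg {G : LRPOG} (x : G) : G := rdiv G (zero G) x.

Definition is_meet {G : LRPOG} (m : G -> G -> G) : Prop :=
  forall x y, le G (m x y) x /\ le G (m x y) y /\
    (forall z, le G z x -> le G z y -> le G z (m x y)).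

Definition is_join {G : LRPOG} (j : G -> G -> G) : Prop :=
  forall x y, le G x (j x y) /\ le G y (j x y) /\
    (forall z, le G x z -> le G y z -> le G (j x y) z).

Definition commutative_mul (G : LRPOG) : Prop :=
  forall x y : G, mul G x y = mul G y x.

Definition contraposition (G : LRPOG) : Prop :=
  forall x y : G, rdiv G x y = rdiv G (neg y) (neg x).

Definition skew_divisibility {G : LRPOG} (meet : G -> G -> G) : Prop :=
  forall x y : G, mul G (rdiv G (neg y) (neg x)) y = meet x y.

Definition divisibility {G : LRPOG} (meet : G -> G -> G) : Prop :=
  forall x y : G, mul G (rdiv G x y) y = meet x y.

Definition double_negation (G : LRPOG) : Prop :=
  forall x : G, neg (neg x) = x.


(* Instantiating the laws at y = 1, where x / 1 = x and ~1 = 0, already forces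
   ~~x = x.  Conversely, under double negation the skew divisibility law at
   (~y, ~x) yields (x / y) * ~x <= ~y, i.e. x / y <= ~y / ~x, and at (x, y) it
   yields ~y / ~x <= x / y; so skew divisibility gives contraposition, and the
   two divisibility laws then coincide. *)

Section Residuation.

Variable G : LRPOG.

Lemma rdiv_1 (x : G) : rdiv G x (one G) = x.
Proof.
  apply le_antisym.
  - rewrite <- (mul_1r G (rdiv G x (one G))).
    apply residuation, le_refl.
  - apply residuation. rewrite mul_1r. apply le_refl.
Qed.

Lemma neg_1 : neg (one G) = zero G.
Proof. apply rdiv_1. Qed.

Lemma meet_1r (meet : G -> G -> G) (Hmeet : is_meet meet) (x : G) :
  meet x (one G) = x.
Proof.
  destruct (Hmeet x (one G)) as [Hx [_ Hglb]].
  apply le_antisym; [exact Hx |].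
  apply Hglb; [apply le_refl | apply one_greatest].
Qed.

Lemma contraposition_double_negation : contraposition G -> double_negation G.
Proof.
  intros Hcontra x.
  pose proof (Hcontra x (one G)) as Hx.
  rewrite rdiv_1, neg_1 in Hx.
  symmetry. exact Hx.
Qed.

Section SkewDivisibility.

Variable meet : G -> G -> G.
Hypothesis Hmeet : is_meet meet.

Lemma skew_divisibility_double_negation :
  skew_divisibility meet -> double_negation G.
Proof.
  intros Hskew x.
  pose proof (Hskew x (one G)) as Hx.
  rewrite mul_1r, meet_1r, neg_1 in Hx by exact Hmeet.
  exact Hx.
Qed.

Lemma skew_divisibility_contraposition :
  skew_divisibility meet -> contraposition G.
Proof.
  intros Hskew x y.
  pose proof (skew_divisibility_double_negation Hskew) as Hdn.
  apply le_antisym; apply residuation.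
  - pose proof (Hskew (neg y) (neg x)) as Hxy.
    rewrite !Hdn in Hxy.
    rewrite Hxy. apply (Hmeet (neg y) (neg x)).
  - rewrite Hskew. apply (Hmeet x y).
Qed.

Lemma skew_divisibilityE :
  skew_divisibility meet <-> divisibility meet /\ contraposition G.
Proof.
  split.
  - intros Hskew.
    pose proof (skew_divisibility_contraposition Hskew) as Hcontra.
    split; [| exact Hcontra].
    intros x y. rewrite Hcontra. apply Hskew.
  - intros [Hdiv Hcontra] x y. rewrite <- Hcontra. apply Hdiv.
Qed.

End SkewDivisibility.

End Residuation.

Theorem mainTheorem11 (G : LRPOG) (meet join : G -> G -> G)
  (Hmeet : is_meet meet) (Hjoin : is_join join)
  (Hcomm : commutative_mul G) :
  (contraposition G -> double_negation G) /\
  (skew_divisibility meet -> double_negation G) /\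
  (skew_divisibility meet <-> divisibility meet /\ contraposition G).
Proof.
  split; [| split].
  - apply contraposition_double_negation.
  - exact (skew_divisibility_double_negation G meet Hmeet).
  - exact (skew_divisibilityE G meet Hmeet).
Qed.
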